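(* Let $P\in N_1$ be a sum of $6$ monomials, not necessarily distinct (i.e. $P(1)=6$). If $P$ does not have unique factorisation inside $N_1$, then $P=X^a(1+X^b+X^{2b}+X^{3b}+X^{4b}+X^{5b})$ for some integers $a\ge0$ and $b\ge1$.
   Context: $N_1=\mathbb{Z}_{\ge0}[X]$ is the semiring of univariate polynomials with nonnegative integer coefficients. An element $Q\neq0,1$ of $N_1$ is irreducible if in every factorisation $Q=ST$ with $S,T\in N_1$ one of $S,T$ is $1$. $P$ has unique factorisation in $N_1$ if any two factorisations of $P$ into irreducibles of $N_1$ coincide up to order of the factors. *)

From mathcomp Require Import all_boot all_algebra.
Set Implicit Arguments. Unset Strict Implicit. Unset Printing Implicit Defensive.
Import GRing.Theory.
Local Open Scope ring_scope.

(* N_1 = Z_{>=0}[X] is modelled as {poly nat} (nat is a commutative semiring). *)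
Notation N1 := {poly nat}.

Definition irreducibleN1 (Q : N1) : Prop :=
  Q <> 0 /\ Q <> 1 /\ forall S T : N1, Q = S * T -> S = 1 \/ T = 1.

Definition is_factorisationN1 (P : N1) (s : seq N1) : Prop :=
  (forall q, q \in s -> irreducibleN1 q) /\ \prod_(q <- s) q = P.

Definition unique_factorisationN1 (P : N1) : Prop :=
  forall s t : seq N1, is_factorisationN1 P s -> is_factorisationN1 P t ->
    perm_eq s t.

From mathcomp Require Import all_boot all_algebra.
From mathcomp Require Import zify ring.
From Stdlib Require Import Classical.
Set Implicit Arguments. Unset Strict Implicit.
Import GRing.Theory.

(* Every element of N_1 is a sum of monomials X^e, so it is determined by the multiset
   of its exponents. An irreducible factor other than X has a nonzero constant term and
   takes a value at least 2 at X = 1. Hence all factorisations of P contain X the same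
   number of times, and since P(1) = 6 their remaining factors are either a single
   irreducible or a pair A, B with A(1) = 2 and B(1) = 3, i.e. A = 1 + X^m and B a sum of
   three monomials. Two pair factorisations (1 + X^m) B = (1 + X^n) B' with m = n coincide,
   as N_1 embeds in the integral domain Z[X]. If m < n, the exponent multisets of the two
   products have the same least and greatest element; once these are cancelled, the four
   remaining exponents can only be matched when B = X^a (1 + X^(2m) + X^(4m)). *)

Lemma perm_least_eq (T : eqType) (r : rel T) (s t : seq T) x y :
  antisymmetric r -> perm_eq s t -> x \in s -> y \in t ->
  all (r x) s -> all (r y) t -> x = y.
Proof.
move=> antir st xs yt /allP rxs /allP ryt; apply: antir.
by rewrite rxs ?(perm_mem st) // ryt -?(perm_mem st).
Qed.

Lemma perm_cons_nth (T : eqType) (x0 x : T) s t : perm_eq t (x :: s) ->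
  exists2 i, i < size t & nth x0 t i = x /\ perm_eq (take i t ++ drop i.+1 t) s.
Proof.
move=> eq_t; have xt : x \in t by rewrite (perm_mem eq_t) mem_head.
set i := index x t; have lt_i : i < size t by rewrite index_mem.
have Dt : t = take i t ++ x :: drop i.+1 t.
  by rewrite -(nth_index x0 xt) -/i -drop_nth ?cat_take_drop.
exists i => //; split; first exact: nth_index.
rewrite -(perm_cons x); apply: perm_trans eq_t.
by rewrite {3}Dt -cat1s perm_catCA.
Qed.

Lemma shifted_triples (t1 t2 t3 v1 v2 v3 m n : nat) :
  t1 <= t2 <= t3 -> v1 <= v2 <= v3 -> m < n ->
  perm_eq [:: t1; t2; t3; m + t1; m + t2; m + t3]
          [:: v1; v2; v3; n + v1; n + v2; n + v3] ->
  t2 = 2 * m + t1 /\ t3 = 4 * m + t1 /\ 0 < m.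
Proof.
move=> /andP[t12 t23] /andP[v12 v23] mn eqM.
have bot : t1 = v1.
  apply: (perm_least_eq anti_leq eqM); rewrite ?mem_head //=; lia.
have top : m + t3 = n + v3.
  have anti_geq : antisymmetric geq by move=> a b /anti_leq.
  apply: (perm_least_eq anti_geq eqM); rewrite ?inE ?eqxx ?orbT //=; lia.
move: eqM; rewrite bot perm_cons top.
rewrite -[[:: t2 & _]]/([:: t2; t3; m + v1; m + t2] ++ [:: n + v3]).
rewrite -[[:: v2 & _]]/([:: v2; v3; n + v1; n + v2] ++ [:: n + v3]).
rewrite perm_cat2r perm_sym.
(* Match the four remaining exponents in every possible way. *)
do 4 move/(perm_cons_nth 0) => [[|[|[|[|?]]]] //= _ [? ]].
all: by move=> _; lia.
Qed.

Lemma filter_pred1 (T : eqType) (x : T) s : filter (pred1 x) s = nseq (count_mem x s) x.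
Proof. by elim: s => //= y s ->; case: eqP => [->|]. Qed.

Lemma prod6_shape (T : eqType) (f : T -> nat) (o : seq T) :
  all (fun q => 1 < f q) o -> \prod_(q <- o) f q = 6 ->
  (exists Q, o = [:: Q]) \/ exists A B, perm_eq o [:: A; B] /\ f A = 2 /\ f B = 3.
Proof.
case: o => [|A [|B [|C o]]]; rewrite ?big_nil ?big_cons ?big_nil //=.
- by move=> _ _; left; exists A.
- rewrite muln1 andbT => /andP[fA fB] fAB; right.
  have [fA2|fA3] : f A = 2 \/ f A = 3 by nia.
  + by exists A, B; split; [|lia].
  + exists B, A; split; [apply/permPl; exact: perm_rev [:: B; A] | lia].
- move=> /and4P[fA fB fC _]; case: (\prod_(q <- o) f q) => [|p]; nia.
Qed.

Local Open Scope ring_scope.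

Definition Xsum (e : seq nat) : {poly nat} := \sum_(i <- e) 'X^i.

Lemma coef_Xsum e j : (Xsum e)`_j = count_mem j e.
Proof.
elim: e => [|i e IHe]; first by rewrite /Xsum big_nil coef0.
by rewrite /Xsum big_cons coefD coefXn -/(Xsum e) IHe natn /= eq_sym.
Qed.

Lemma Xsum_inj e f : Xsum e = Xsum f -> perm_eq e f.
Proof. by move=> eq_ef; apply/allP => j _ /=; rewrite -!coef_Xsum eq_ef. Qed.

Lemma perm_Xsum e f : perm_eq e f -> Xsum e = Xsum f.
Proof. exact: perm_big. Qed.

Lemma Xsum_cat e f : Xsum (e ++ f) = Xsum e + Xsum f.
Proof. exact: big_cat. Qed.

Lemma Xsum_addn k e : Xsum (map (addn k) e) = 'X^k * Xsum e.
Proof. by rewrite /Xsum big_map mulr_sumr; apply: eq_bigr => i _; rewrite exprD. Qed.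

Lemma horner1_Xsum e : (Xsum e).[1] = size e.
Proof.
elim: e => [|i e IHe]; first by rewrite /Xsum big_nil horner0.
by rewrite /Xsum big_cons hornerD -/(Xsum e) IHe hornerXn expr1n.
Qed.

Lemma Xsum_exists (Q : {poly nat}) : exists e, Q = Xsum e.
Proof.
have Xsum_nseq0 c : Xsum (nseq c 0%N) = c%:P.
  elim: c => [|c IHc]; first by rewrite /Xsum big_nil.
  rewrite /Xsum /= big_cons -/(Xsum _) IHc expr0 -polyC1 -polyCD.
  exact: (congr1 polyC (add1n c)).
elim/poly_ind: Q => [|Q c [e ->]]; first by exists [::]; rewrite /Xsum big_nil.
exists (map (addn 1) e ++ nseq c 0%N).
by rewrite Xsum_cat Xsum_addn Xsum_nseq0 expr1 mulrC.
Qed.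

Lemma mul1DXn_Xsum m e : (1 + 'X^m) * Xsum e = Xsum (e ++ map (addn m) e).
Proof. by rewrite Xsum_cat Xsum_addn mulrDl mul1r. Qed.

Lemma mulN1I (A : {poly nat}) : A != 0 -> injective ( *%R A).
Proof.
pose toZ := map_poly (GRing.RMorphism.sort (Posz : {rmorphism nat -> int})).
have inj_toZ : injective toZ by apply: map_inj_poly => // m n [].
move=> nzA; have nzA' : toZ A != 0 by rewrite -(rmorph0 toZ) (inj_eq inj_toZ).
by move=> B C /(congr1 toZ); rewrite /toZ !rmorphM -/toZ => /(mulfI nzA') /inj_toZ.
Qed.

Lemma mulXn_coef0_inj k k' (R R' : {poly nat}) :
  (0 < (R`_0)%R)%N -> (0 < (R'`_0)%R)%N -> 'X^k * R = 'X^k' * R' -> k = k' /\ R = R'.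
Proof.
move=> R0 R'0 eqR.
have coefE i : ('X^k * R)`_i = ('X^k' * R')`_i by rewrite eqR.
have eq_k : k = k'.
  case: (ltngtP k k') => // lt_k; [move: (coefE k) | move: (coefE k')].
  - by rewrite !coefXnM ltnn lt_k subnn => R0_eq0; rewrite R0_eq0 in R0.
  - by rewrite !coefXnM ltnn lt_k subnn => R'0_eq0; rewrite -R'0_eq0 in R'0.
split=> //; apply/polyP => i; move: (coefE (i + k)%N).
by rewrite -eq_k !coefXnM ltnNge leq_addl addnK.
Qed.

Lemma irreducibleN1M_horner1 (S T : {poly nat}) :
  irreducibleN1 (S * T) -> S.[1] = 1%N \/ T.[1] = 1%N.
Proof. by case=> _ [_ /(_ S T erefl)] [->|->]; [left|right]; rewrite -polyC1 hornerC. Qed.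

Lemma irreducibleN1_X_or_coef0 q :
  irreducibleN1 q -> q = 'X \/ (1 < q.[1])%N /\ (0 < (q`_0)%R)%N.
Proof.
case=> _ [q_neq1 irr_q]; have [e De] := Xsum_exists q.
have [e0 | e_pos] := boolP (0%N \in e).
  right; rewrite De coef_Xsum horner1_Xsum -has_count has_pred1 e0; split=> //.
  case: e e0 De => [|i [|j e]] //; rewrite inE => /eqP <- De.
  by move: q_neq1; rewrite De /Xsum big_seq1 expr0.
have De1 : e = map (addn 1) (map predn e).
  rewrite -map_comp -[LHS]map_id; apply/eq_in_map => i ei /=.
  by case: i ei e_pos => [->|].
have Dq : q = 'X * Xsum (map predn e) by rewrite De {1}De1 Xsum_addn expr1.
have [X1 | E1] := irr_q _ _ Dq; last by left; rewrite Dq E1 mulr1.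
by move: (congr1 (coefp 1) X1); rewrite /= coefX coef1.
Qed.

Definition Xfree_factors (o : seq {poly nat}) :=
  forall q, q \in o -> irreducibleN1 q /\ q != 'X.

Lemma Xfree_factorP o q : Xfree_factors o -> q \in o ->
  (1 < q.[1])%N /\ (0 < (q`_0)%R)%N.
Proof.
by move=> Xo /Xo[/irreducibleN1_X_or_coef0[-> | //]]; rewrite eqxx.
Qed.

Lemma Xfree_prod_coef0 o : Xfree_factors o -> (0 < ((\prod_(q <- o) q)`_0)%R)%N.
Proof.
elim: o => [|q o IHo] Xo; first by rewrite big_nil coef1.
have [_ q0] := Xfree_factorP Xo (mem_head q o).
rewrite big_cons coef0M muln_gt0 q0 IHo // => r ro.
by apply: Xo; rewrite inE ro orbT.
Qed.

Lemma Xfree_shape o : Xfree_factors o -> (\prod_(q <- o) q).[1] = 6%N ->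
  (exists Q, o = [:: Q]) \/
  exists A B, perm_eq o [:: A; B] /\ A.[1] = 2%N /\ B.[1] = 3%N.
Proof.
move=> Xo o6; apply: (prod6_shape (f := fun q : {poly nat} => q.[1])).
  by apply/allP => q /(Xfree_factorP Xo)[].
by rewrite -horner_prod.
Qed.

Definition dropX (s : seq {poly nat}) := filter (predC (pred1 'X)) s.

Lemma factorisation_dropX P s : is_factorisationN1 P s ->
  P = 'X^(count_mem 'X s) * \prod_(q <- dropX s) q.
Proof.
case=> _ <-; have Es : perm_eq (filter (pred1 'X) s ++ dropX s) s.
  by rewrite perm_filterC.
by rewrite -(perm_big _ Es) big_cat filter_pred1 big_nseq iter_mulr_1.
Qed.

Lemma dropX_Xfree P s : is_factorisationN1 P s -> Xfree_factors (dropX s).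
Proof. by case=> irr_s _ q; rewrite mem_filter => /andP[/= q_neqX /irr_s]. Qed.

Lemma perm_dropX s t : count_mem 'X s = count_mem 'X t ->
  perm_eq (dropX s) (dropX t) -> perm_eq s t.
Proof.
move=> eq_k eq_d; rewrite -(perm_filterC (pred1 'X) s) perm_sym.
by rewrite -(perm_filterC (pred1 'X) t) perm_sym !filter_pred1 eq_k perm_cat2l.
Qed.

Lemma horner1_eq2 A : A.[1] = 2%N -> (0 < (A`_0)%R)%N -> exists m, A = 1 + 'X^m.
Proof.
have [e ->] := Xsum_exists A; rewrite horner1_Xsum coef_Xsum.
case: e => [|i [|j []]] //= _; rewrite /Xsum !big_cons big_nil addr0.
case: i j => [|i] [|j] // _; [exists 0%N | exists j.+1 | exists i.+1; rewrite addrC];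
  by rewrite expr0.
Qed.

Lemma horner1_eq3 B : B.[1] = 3%N ->
  exists v1 v2 v3, (v1 <= v2 <= v3)%N /\ B = Xsum [:: v1; v2; v3].
Proof.
have [e ->] := Xsum_exists B; rewrite horner1_Xsum => size_e.
have /perm_Xsum <- : perm_eq (sort leq e) e by rewrite perm_sort.
have := size_sort leq e; have := sort_sorted leq_total e; rewrite size_e.
case: (sort leq e) => [|v1 [|v2 [|v3 []]]] //= /and3P[v12 v23 _] _.
by exists v1, v2, v3; rewrite v12.
Qed.

Definition geometric6 (R : {poly nat}) :=
  exists a b, (0 < b)%N /\ R = 'X^a * \sum_(i < 6) 'X^(i * b).

Lemma mul1DXn_progression m a :
  (1 + 'X^m) * Xsum [:: a; (2 * m + a)%N; (4 * m + a)%N] = 'X^a * \sum_(i < 6) 'X^(i * m).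
Proof.
rewrite /Xsum !big_cons big_nil !big_ord_recl big_ord0 /bump /= !addr0.
rewrite !exprD -!(mulnC m) !exprM; ring.
Qed.

Lemma geometric6_mul1DXn m n B B' : (m < n)%N -> B.[1] = 3%N -> B'.[1] = 3%N ->
  (1 + 'X^m) * B = (1 + 'X^n) * B' ->
  geometric6 ((1 + 'X^m) * B).
Proof.
move=> lt_mn /horner1_eq3[t1 [t2 [t3 [t_sorted ->]]]].
move=> /horner1_eq3[v1 [v2 [v3 [v_sorted ->]]]].
rewrite [in X in X = _ -> _]mul1DXn_Xsum mul1DXn_Xsum => /Xsum_inj.
move=> /(shifted_triples t_sorted v_sorted lt_mn)[-> [-> m_gt0]].
by exists t1, m; rewrite mul1DXn_progression.
Qed.

Lemma pair_factorisations A B A' B' :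
  A.[1] = 2%N -> B.[1] = 3%N -> A'.[1] = 2%N -> B'.[1] = 3%N ->
  (0 < (A`_0)%R)%N -> (0 < (A'`_0)%R)%N -> A * B = A' * B' ->
  A = A' /\ B = B' \/ geometric6 (A * B).
Proof.
move=> A2 B3 A'2 B'3 /(horner1_eq2 A2)[m Am] /(horner1_eq2 A'2)[n A'n] eqAB.
subst A A'; case: (ltngtP m n) => [lt_mn | lt_nm | eq_mn].
- by right; apply: geometric6_mul1DXn lt_mn B3 B'3 eqAB.
- by right; rewrite eqAB; apply: geometric6_mul1DXn lt_nm B'3 B3 (esym eqAB).
- subst n; left; split=> //; apply: mulN1I eqAB.
  by apply/eqP => A0; move: A2; rewrite A0 horner0.
Qed.

Lemma prod_perm_pair (r : seq {poly nat}) A B :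
  perm_eq r [:: A; B] -> \prod_(q <- r) q = A * B.
Proof. by move=> rAB; rewrite (perm_big _ rAB) big_cons big_seq1. Qed.

Lemma Xfree_pair_coef0 o A B : Xfree_factors o -> perm_eq o [:: A; B] ->
  (0 < (A`_0)%R)%N.
Proof.
move=> Xo oAB; have Ao : A \in o by rewrite (perm_mem oAB) mem_head.
by have [] := Xfree_factorP Xo Ao.
Qed.

Lemma Xfree_perm_or_geometric6 o o' : Xfree_factors o -> Xfree_factors o' ->
  (\prod_(q <- o) q).[1] = 6%N -> \prod_(q <- o) q = \prod_(q <- o') q ->
  perm_eq o o' \/ geometric6 (\prod_(q <- o) q).
Proof.
move=> Xo Xo' o6 eq_o; have o'6 := o6; rewrite eq_o in o'6.
case: (Xfree_shape Xo o6) => [[Q DQ] | [A [B [oAB [A2 B3]]]]];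
  case: (Xfree_shape Xo' o'6) => [[Q' DQ'] | [A' [B' [oAB' [A'2 B'3]]]]].
- by left; move: eq_o; rewrite DQ DQ' !big_seq1 => ->.
- have /irreducibleN1M_horner1 : irreducibleN1 (A' * B').
    rewrite -(prod_perm_pair oAB') -eq_o DQ big_seq1.
    by apply: (Xo Q _).1; rewrite DQ mem_head.
  by rewrite A'2 B'3 => -[].
- have /irreducibleN1M_horner1 : irreducibleN1 (A * B).
    rewrite -(prod_perm_pair oAB) eq_o DQ' big_seq1.
    by apply: (Xo' Q' _).1; rewrite DQ' mem_head.
  by rewrite A2 B3 => -[].
have eqAB : A * B = A' * B' by rewrite -(prod_perm_pair oAB) -(prod_perm_pair oAB').
have A0 := Xfree_pair_coef0 Xo oAB; have A'0 := Xfree_pair_coef0 Xo' oAB'.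
case: (pair_factorisations A2 B3 A'2 B'3 A0 A'0 eqAB) => [[eqA eqB] | AP].
  by left; rewrite (perm_trans oAB) // eqA eqB perm_sym.
by right; rewrite (prod_perm_pair oAB).
Qed.

Theorem mainTheorem9 (P : {poly nat}) :
  P.[1] = 6%N ->
  ~ unique_factorisationN1 P ->
  exists a b : nat, (1 <= b)%N /\
    P = 'X^a * (\sum_(i < 6) 'X^(i * b)).
Proof.
move=> P6 not_uP.
have [s [t [fs [ft not_st]]]] : exists s t,
    is_factorisationN1 P s /\ is_factorisationN1 P t /\ ~ perm_eq s t.
  apply: NNPP => none; apply: not_uP => s t fs ft.
  by apply: NNPP => not_st; apply: none; exists s, t.
have Ps := factorisation_dropX fs; have Pt := factorisation_dropX ft.
have [eq_k eq_R] := mulXn_coef0_inj (Xfree_prod_coef0 (dropX_Xfree fs))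
  (Xfree_prod_coef0 (dropX_Xfree ft)) (etrans (esym Ps) Pt).
have R6 : (\prod_(q <- dropX s) q).[1] = 6%N.
  by move: P6; rewrite Ps hornerM hornerXn expr1n mul1r.
case: (Xfree_perm_or_geometric6 (dropX_Xfree fs) (dropX_Xfree ft) R6 eq_R).
  by move/(perm_dropX eq_k)/not_st.
move=> [a [b [b_gt0 AP]]]; exists (count_mem 'X s + a)%N, b; split=> //.
by rewrite Ps AP exprD mulrA.
Qed.
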